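(* For every $m\geq 1$ and every $\alpha=(\alpha_0,\dots,\alpha_{m-1})\in\mathbb{N}^m$, the function $n\mapsto u_\alpha(n)$ has a rational generating function; that is, there exist polynomials $P(x),Q(x)\in\mathbb{C}[x]$ with $Q(0)\neq 0$ such that $\sum_{n\geq 0}u_\alpha(n)x^n=P(x)/Q(x)$ as formal power series (equivalently, $u_\alpha(n)$ satisfies a linear recurrence with constant coefficients for all sufficiently large $n$).
   Context: $\mathbb{N}=\{0,1,2,\dots\}$. Stern's triangle is the array of integers $a(n,k)$, $n\geq 0$, $k\in\mathbb{Z}$, defined as follows. Row $n$ consists of $a(n,0),\dots,a(n,N_n)$ with $N_n=2^{n+1}-2$, and $a(n,k)=0$ if $k<0$ or $k>N_n$. Row $0$ is $a(0,0)=1$. Given row $n$ with $N=N_n$: $a(n+1,0)=1$, $a(n+1,2j+1)=a(n,j)$ for $0\leq j\leq N$, $a(n+1,2j+2)=a(n,j)+a(n,j+1)$ for $0\leq j\leq N-1$, and $a(n+1,2N+2)=1$. (Equivalently, $\sum_k a(n,k)x^k=\prod_{i=0}^{n-1}(1+x^{2^i}+x^{2\cdot 2^i})$.) For $\alpha=(\alpha_0,\dots,\alpha_{m-1})\in\mathbb{N}^m$ define $$u_\alpha(n)=\sum_{k\geq 0} a(n,k)^{\alpha_0}a(n,k+1)^{\alpha_1}\cdots a(n,k+m-1)^{\alpha_{m-1}}.$$ *)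

From mathcomp Require Import all_boot all_algebra.
From mathcomp Require Import reals complex.
Set Implicit Arguments. Unset Strict Implicit. Unset Printing Implicit Defensive.
Import GRing.Theory.

(* N_n = 2^(n+1) - 2 : index of the last entry of row n *)
Definition Nrow (n : nat) : nat := 2 ^ n.+1 - 2.

(* Stern's triangle a(n,k) for k >= 0 (a(n,k) = 0 for k > N_n; negative k
   never occur in u_alpha since the sum is over k >= 0). *)
Fixpoint stern (n k : nat) {struct n} : nat :=
  match n with
  | 0 => if k == 0 then 1 else 0
  | n'.+1 =>
      if k == 0 then 1
      else if k == (Nrow n').*2.+2 then 1
      else if (Nrow n').*2.+2 < k then 0
      else if odd k then stern n' k./2           (* k = 2j+1, j = k/2 *)
      else stern n' k./2.-1 + stern n' k./2      (* k = 2j+2, j = k/2 - 1 *)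
  end.

(* u_alpha(n) = sum_{k>=0} prod_i a(n,k+i)^alpha_i.  For alpha <> 0 every
   term with k > N_n vanishes, so the sum over 0 <= k <= N_n is the full sum. *)
Definition u_alpha (m : nat) (alpha : m.-tuple nat) (n : nat) : nat :=
  \sum_(k < (Nrow n).+1) \prod_(i < m) stern n (k + i) ^ tnth alpha i.

From mathcomp Require Import all_boot all_algebra.
From mathcomp Require Import reals complex.
From mathcomp Require Import zify.
Import GRing.Theory.
Set Implicit Arguments. Unset Strict Implicit. Unset Printing Implicit Defensive.
Local Open Scope ring_scope.

(* Shift row n of Stern's triangle by one place, c_n(k) = a(n, k - 1), so that
   c_(n+1)(2j) = c_n(j) and c_(n+1)(2j+1) = c_n(j) + c_n(j+1) with no boundary
   cases. For a window length L >= 3, the window (c_(n+1)(k + i))_(i < L) at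
   k = 2j or 2j + 1 consists of linear forms in the window (c_n(j + i))_(i < L).
   Hence, for each monomial of degree at most D in L variables, summing it over
   all windows of row n + 1 gives a linear combination of the analogous sums of
   monomials of degree at most D over row n. These finitely many sequences form
   a linear system V(n+1) = M V(n); by Cayley-Hamilton each of them satisfies
   the recurrence of the characteristic polynomial of M, whose reciprocal is a
   denominator of its generating function. Finally u_alpha is the sum of the
   monomial with exponents (0, alpha_0, ..., alpha_(m-1), 0). *)

Section RationalGF.
Variable F : comNzRingType.

Definition rational_gf (v : nat -> F) : Prop :=
  exists P Q : {poly F}, Q.[0] != 0 /\
    forall n, \sum_(j < n.+1) Q`_j * v (n - j)%N = P`_n.

Lemma eq_rational_gf (v w : nat -> F) : v =1 w -> rational_gf v -> rational_gf w.
Proof.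
move=> vw [P [Q [Q0 PQ]]]; exists P, Q; split=> // n.
by rewrite -PQ; apply: eq_bigr => j _; rewrite vw.
Qed.

Lemma monic_recurrence_rational_gf (v : nat -> F) (p : {poly F}) : p \is monic ->
  (forall n, \sum_(i < size p) p`_i * v (n + i)%N = 0) -> rational_gf v.
Proof.
move=> p_monic p_rec; pose d := (size p).-1.
have size_p : size p = d.+1 by rewrite /d prednK // size_poly_gt0 monic_neq0.
pose Q := \poly_(j < d.+1) p`_(d - j).
exists (\poly_(n < d) \sum_(j < n.+1) Q`_j * v (n - j)%N), Q; split.
  by rewrite horner_coef0 coef_poly subn0 /d -lead_coefE (monicP p_monic) oner_eq0.
move=> n; rewrite coef_poly; case: ltnP => // d_le_n.
transitivity (\sum_(j < d.+1) Q`_j * v (n - j)%N).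
  rewrite [RHS](big_ord_widen _ (fun j => Q`_j * v (n - j)%N) (_ : d.+1 <= n.+1)%N) //.
  rewrite [RHS]big_mkcond.
  by apply: eq_bigr => j _; rewrite coef_poly; case: ifP; rewrite ?mul0r.
apply: etrans (p_rec (n - d)%N); rewrite size_p [RHS](reindex_inj rev_ord_inj).
apply: eq_bigr => i _.
have i_le_d := ltn_ord i; rewrite coef_poly i_le_d.
by congr (_ * v _); rewrite /= subSS; lia.
Qed.

Lemma mx_recurrence_char_poly k (M : 'M[F]_k) (S : nat -> 'cV[F]_k) :
  (forall n, S n.+1 = M *m S n) ->
  forall a n, \sum_(i < size (char_poly M)) (char_poly M)`_i * S (n + i)%N a 0 = 0.
Proof.
case: k M S => [|k] M S S_rec a n; first by case: a.
have S_pow i : S (n + i)%N = M ^+ i *m S n.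
  elim: i => [|i IH]; first by rewrite addn0 expr0 mul1mx.
  by rewrite addnS S_rec IH exprS mulmxA.
have : horner_mx M (char_poly M) *m S n = 0 by rewrite Cayley_Hamilton mul0mx.
rewrite -{1}(coefK (char_poly M)) poly_def linear_sum mulmx_suml => /matrixP/(_ a 0).
rewrite summxE mxE => h; apply: etrans h; apply: eq_bigr => i _.
by rewrite S_pow linearZ /= rmorphXn /= horner_mx_X -scalemxAl [RHS]mxE.
Qed.

Lemma linear_system_rational_gf (I : finType) (V : I -> nat -> F) :
  (forall g, exists c : I -> F, forall n, V g n.+1 = \sum_h c h * V h n) ->
  forall g, rational_gf (V g).
Proof.
move=> /fin_all_exists [coef V_rec] g.
pose M : 'M[F]_#|I| := \matrix_(a, b) coef (enum_val a) (enum_val b).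
pose S n : 'cV[F]_#|I| := \col_a V (enum_val a) n.
have S_rec n : S n.+1 = M *m S n.
  apply/matrixP => a z; rewrite !mxE V_rec (big_enum_val (fun h => coef _ h * V h n)) /=.
  by apply: eq_bigr => b _; rewrite !mxE.
apply: (monic_recurrence_rational_gf (char_poly_monic M)) => n.
apply: etrans (mx_recurrence_char_poly S_rec (enum_rank g) n).
by apply: eq_bigr => i _; rewrite mxE enum_rankK.
Qed.

End RationalGF.

Lemma sumn_gt0 (s : seq nat) : has (fun e => 0 < e)%N s -> (0 < sumn s)%N.
Proof.
by elim: s => //= x s IH /orP [x_gt0|/IH s_gt0]; rewrite addn_gt0 ?x_gt0 ?s_gt0 ?orbT.
Qed.

Lemma leq_nth_sumn (s : seq nat) k : (nth 0 s k <= sumn s)%N.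
Proof.
by elim: s k => [|x s IH] [|k] //=; rewrite ?leq_addr // (leq_trans (IH k)) ?leq_addl.
Qed.

Section PolynomialFunctions.
Variables (F : comNzRingType) (L D : nat).
(* Exponent vectors are capped at D, so only polynomials of total degree at
   most D can be represented: hence the degree side conditions below. *)
Local Notation expo := {ffun 'I_L -> 'I_D.+1}.

Definition mdeg (g : expo) : nat := (\sum_(i < L) g i)%N.

Definition mono (g : expo) (w : nat -> F) : F := \prod_(i < L) w i ^+ g i.

Definition polyfun (e : nat) (f : (nat -> F) -> F) : Prop :=
  exists c : expo -> F, (forall g, (e < mdeg g)%N -> c g = 0) /\
    forall w, f w = \sum_g c g * mono g w.

Lemma eq_polyfun e (f f' : (nat -> F) -> F) : f =1 f' -> polyfun e f -> polyfun e f'.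
Proof. by move=> ff' [c [c_deg f_sum]]; exists c; split=> // w; rewrite -ff'. Qed.

Lemma eq_mono g (w w' : nat -> F) : w =1 w' -> mono g w = mono g w'.
Proof. by move=> ww'; apply: eq_bigr => i _; rewrite ww'. Qed.

Lemma leq_mdeg (g : expo) i : (g i <= mdeg g)%N.
Proof. by rewrite /mdeg (bigD1 i) //= leq_addr. Qed.

Lemma polyfun_mono g : polyfun (mdeg g) (mono g).
Proof.
exists (fun h => (h == g)%:R); split=> [h|w].
  by case: eqP => [->|]; rewrite ?ltnn.
rewrite (bigD1 g) //= eqxx mul1r big1 ?addr0 // => h /negbTE ->.
by rewrite mul0r.
Qed.

Lemma polyfun1 : polyfun 0 (fun _ => 1).
Proof.
pose g0 : expo := [ffun _ => ord0].
have mdeg_g0 : mdeg g0 = 0%N by rewrite /mdeg big1 // => i _; rewrite ffunE.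
rewrite -mdeg_g0; apply: eq_polyfun (polyfun_mono g0) => w.
by rewrite /mono big1 // => i _; rewrite ffunE expr0.
Qed.

Lemma polyfun_coord p : (p < L)%N -> (0 < D)%N -> polyfun 1 (fun w => w p).
Proof.
move=> p_lt_L D_gt0; pose g : expo := [ffun i => inord (i == Ordinal p_lt_L)].
have gE i : (g i : nat) = (i == Ordinal p_lt_L).
  by rewrite ffunE inordK //; case: (_ == _).
have mdeg_g : mdeg g = 1%N.
  rewrite /mdeg (bigD1 (Ordinal p_lt_L)) //= big1 ?gE ?eqxx // => i /negbTE i_neq.
  by rewrite gE i_neq.
rewrite -mdeg_g; apply: eq_polyfun (polyfun_mono g) => w.
rewrite /mono (bigD1 (Ordinal p_lt_L)) //= big1 ?gE ?eqxx ?mulr1 // => i /negbTE i_neq.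
by rewrite gE i_neq expr0.
Qed.

Lemma polyfunD e (f f' : (nat -> F) -> F) :
  polyfun e f -> polyfun e f' -> polyfun e (fun w => f w + f' w).
Proof.
move=> [c [c_deg f_sum]] [c' [c'_deg f'_sum]]; exists (fun g => c g + c' g); split.
  by move=> g g_deg; rewrite c_deg // c'_deg // addr0.
by move=> w; rewrite f_sum f'_sum -big_split; apply: eq_bigr => g _; rewrite mulrDl.
Qed.

Definition expo_add (g h : expo) : expo := [ffun i => inord (g i + h i)].

Section ExpoAdd.
Variables g h : expo.
Hypothesis gh_deg : (mdeg g + mdeg h <= D)%N.

Lemma expo_addE i : (expo_add g h i : nat) = (g i + h i)%N.
Proof.
rewrite ffunE inordK // ltnS (leq_trans _ gh_deg) //.
by rewrite leq_add ?leq_mdeg.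
Qed.

Lemma mdeg_expo_add : mdeg (expo_add g h) = (mdeg g + mdeg h)%N.
Proof. by rewrite /mdeg -big_split; apply: eq_bigr => i _; rewrite expo_addE. Qed.

Lemma mono_expo_add w : mono (expo_add g h) w = mono g w * mono h w.
Proof. by rewrite /mono -big_split; apply: eq_bigr => i _; rewrite expo_addE exprD. Qed.

End ExpoAdd.

Lemma polyfunM a b (f f' : (nat -> F) -> F) : (a + b <= D)%N ->
  polyfun a f -> polyfun b f' -> polyfun (a + b) (fun w => f w * f' w).
Proof.
move=> ab_le_D [c [c_deg f_sum]] [c' [c'_deg f'_sum]].
exists (fun k => \sum_(p : expo * expo | expo_add p.1 p.2 == k) c p.1 * c' p.2); split.
  move=> k k_deg; apply: big1 => [[g h]] /= /eqP gh_k.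
  case: (leqP (mdeg g) a) => g_deg; last by rewrite c_deg // mul0r.
  case: (leqP (mdeg h) b) => h_deg; last by rewrite c'_deg // mulr0.
  by move: k_deg; rewrite -gh_k mdeg_expo_add; lia.
move=> w; rewrite f_sum f'_sum big_distrlr pair_big /=.
rewrite (partition_big (fun p : expo * expo => expo_add p.1 p.2) predT) //=.
apply: eq_bigr => k _; rewrite mulr_suml; apply: eq_bigr => [[g h]] /= /eqP <-.
case: (leqP (mdeg g) a) => g_deg; last by rewrite c_deg // !mul0r.
case: (leqP (mdeg h) b) => h_deg; last by rewrite c'_deg // !(mulr0, mul0r).
have gh_deg : (mdeg g + mdeg h <= D)%N by lia.
by rewrite mono_expo_add // mulrACA.
Qed.

Lemma polyfunX k (f : (nat -> F) -> F) : (k <= D)%N ->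
  polyfun 1 f -> polyfun k (fun w => f w ^+ k).
Proof.
move=> + f_lin; elim: k => [_|k IH k_lt_D].
  by apply: eq_polyfun polyfun1 => w; rewrite expr0.
rewrite -addn1; apply: eq_polyfun (polyfunM _ (IH (ltnW k_lt_D)) f_lin) => [w|].
  by rewrite addn1 exprSr.
by rewrite addn1.
Qed.

Lemma polyfun_prod (I : Type) (s : seq I) (e : I -> nat) (f : I -> (nat -> F) -> F) :
  (forall i, polyfun (e i) (f i)) -> (\sum_(i <- s) e i <= D)%N ->
  polyfun (\sum_(i <- s) e i) (fun w => \prod_(i <- s) f i w).
Proof.
move=> f_deg; elim: s => [|i s IH].
  by rewrite big_nil => _; apply: eq_polyfun polyfun1 => w; rewrite big_nil.
rewrite big_cons => s_deg.
apply: eq_polyfun (polyfunM s_deg (f_deg i) (IH _)) => [w|]; first by rewrite big_cons.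
exact: leq_trans (leq_addl _ _) s_deg.
Qed.

Lemma polyfun_mono_comp (E : (nat -> F) -> nat -> F) g : (mdeg g <= D)%N ->
  (forall i : 'I_L, polyfun 1 (fun w => E w i)) -> polyfun (mdeg g) (fun w => mono g (E w)).
Proof.
move=> g_deg E_lin.
exact: (polyfun_prod (fun i => polyfunX (ltn_ord (g i)) (E_lin i)) g_deg).
Qed.

End PolynomialFunctions.

Lemma NrowS n : Nrow n.+1 = (Nrow n).*2.+2.
Proof. by rewrite /Nrow !expnS -!muln2; have := expn_gt0 2 n; lia. Qed.

Lemma stern_gt n k : (Nrow n < k)%N -> stern n k = 0%N.
Proof.
case: n => [|n] /=; first by case: k.
rewrite NrowS => k_gt.
have -> : (k == 0) = false by lia.
have -> : (k == (Nrow n).*2.+2) = false by lia.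
by rewrite k_gt.
Qed.

Lemma stern_Nrow n : stern n (Nrow n) = 1%N.
Proof. by case: n => [|n] //=; rewrite NrowS eqxx. Qed.

Fixpoint zstern (n k : nat) {struct n} : nat :=
  match n with
  | 0 => k == 1
  | n'.+1 => if odd k then zstern n' k./2 + zstern n' k./2.+1 else zstern n' k./2
  end.

Lemma zstern0 n : zstern n 0 = 0%N.
Proof. by elim: n => //= n ->. Qed.

Lemma zstern_double n j : zstern n.+1 j.*2 = zstern n j.
Proof. by rewrite /= odd_double doubleK. Qed.

Lemma zstern_doubleS n j : zstern n.+1 j.*2.+1 = (zstern n j + zstern n j.+1)%N.
Proof. by rewrite /= odd_double /= uphalf_double. Qed.

Lemma zsternS n k : zstern n k.+1 = stern n k.
Proof.
elim: n k => [|n IH] k; first by case: k.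
rewrite -(odd_double_half k); move: (k./2) => j; case: (odd k); rewrite ?add1n ?add0n.
  rewrite -doubleS zstern_double IH /= odd_double /= uphalf_double.
  have -> : (j.*2.+1 == (Nrow n).*2.+2) = false by lia.
  by case: ltnP => // j_gt; rewrite stern_gt //; lia.
rewrite zstern_doubleS; case: j => [|j]; first by rewrite zstern0 IH; case: (n).
rewrite !IH /=.
case: eqP => [j_eq|_]; first by rewrite (_ : j = Nrow n) ?stern_Nrow ?stern_gt //; lia.
case: ltnP => [j_gt|_]; first by rewrite !stern_gt //; lia.
by rewrite odd_double /= doubleK.
Qed.

Section SternWindows.
Variables (F : comNzRingType) (L D : nat).
Hypotheses (L_gt2 : (2 < L)%N) (D_gt0 : (0 < D)%N).
Local Notation expo := {ffun 'I_L -> 'I_D.+1}.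
Local Notation polyfun := (@polyfun F L D).

Definition window n k : nat -> F := fun i => (zstern n (k + i))%:R.

Definition refine_window s (w : nat -> F) : nat -> F := fun i =>
  if odd (s + i) then w (s + i)./2 + w (s + i)./2.+1 else w (s + i)./2.

Lemma window_double n j s : window n.+1 (j.*2 + s) =1 refine_window s (window n j).
Proof.
move=> i; rewrite /window /refine_window -addnA.
rewrite -{1}(odd_double_half (s + i)) addnCA -doubleD.
case: (odd (s + i)); rewrite ?zstern_double ?zstern_doubleS ?natrD //.
by rewrite addnS.
Qed.

Lemma polyfun_refine_window s (i : 'I_L) : (s <= 1)%N ->
  polyfun 1 (fun w => refine_window s w i).
Proof.
move=> s_le1; have half_lt : ((s + i)./2.+1 < L)%N.
  have := odd_double_half (s + i); have := ltn_ord i; case: (odd (s + i)) => /=; lia.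
rewrite /refine_window; case: (odd (s + i)).
  exact: polyfunD (polyfun_coord F (ltnW half_lt) D_gt0) (polyfun_coord F half_lt D_gt0).
by apply: (polyfun_coord F) => //; apply: ltnW.
Qed.

(* The range 2^(n+2) contains every window meeting the support [1, 2^(n+1)) of
   row n, and it doubles from n to n + 1. *)
Definition window_sum (g : expo) n : F := \sum_(k < 2 ^ n.+2) mono g (window n k).

Lemma window_sum_recurrence (g : expo) : (mdeg g <= D)%N ->
  exists c : expo -> F, (forall h, (mdeg g < mdeg h)%N -> c h = 0) /\
    forall n, window_sum g n.+1 = \sum_h c h * window_sum h n.
Proof.
move=> g_deg.
have refine_poly s : (s <= 1)%N -> polyfun (mdeg g) (fun w => mono g (refine_window s w)).
  by move=> s_le1; apply: polyfun_mono_comp => // i; apply: polyfun_refine_window.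
have [c [c_deg c_sum]] := polyfunD (refine_poly 0%N isT) (refine_poly 1%N isT).
exists c; split=> // n.
have pairs (f : nat -> F) B : \sum_(k < B.*2) f k = \sum_(j < B) (f j.*2 + f j.*2.+1).
  elim: B => [|B IH]; first by rewrite !big_ord0.
  by rewrite doubleS !big_ord_recr /= IH addrA.
rewrite /window_sum expnS mul2n (pairs (fun k => mono g (window n.+1 k))).
transitivity (\sum_(j < 2 ^ n.+2) \sum_h c h * mono h (window n j)).
  apply: eq_bigr => j _; rewrite -c_sum /=.
  rewrite -(eq_mono g (window_double n j 0)) -(eq_mono g (window_double n j 1)).
  by rewrite addn0 addn1.
by rewrite exchange_big; apply: eq_bigr => h _; rewrite mulr_sumr.
Qed.

(* Sums of monomials of degree > D are not closed under the recurrence; zeroing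
   them makes the whole family indexed by expo a closed linear system. *)
Definition trunc_window_sum (g : expo) n : F :=
  if (mdeg g <= D)%N then window_sum g n else 0.

Lemma trunc_window_sum_recurrence g : exists c : expo -> F,
  forall n, trunc_window_sum g n.+1 = \sum_h c h * trunc_window_sum h n.
Proof.
rewrite /trunc_window_sum.
case: leqP => g_deg; last first.
  by exists (fun _ => 0) => n; rewrite big1 // => h _; rewrite mul0r.
have [c [c_deg c_rec]] := window_sum_recurrence g_deg.
exists c => n; rewrite c_rec; apply: eq_bigr => h _.
by case: leqP => // h_deg; rewrite c_deg ?mul0r // (leq_ltn_trans g_deg h_deg).
Qed.

End SternWindows.

Section SternExponent.
Variables (m : nat) (alpha : m.-tuple nat).

Definition stern_exponent : {ffun 'I_m.+2 -> 'I_(sumn alpha).+1} :=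
  [ffun i : 'I_m.+2 => inord (nth 0 (0 :: alpha) i)].

Lemma stern_exponentE i : (stern_exponent i : nat) = nth 0 (0 :: alpha) i.
Proof. by rewrite ffunE inordK // ltnS (leq_nth_sumn (0 :: alpha)). Qed.

Lemma mdeg_stern_exponent : mdeg stern_exponent = sumn alpha.
Proof.
rewrite /mdeg (eq_bigr _ (fun i _ => stern_exponentE i)) big_ord_recr /=.
rewrite nth_default ?size_tuple // addn0.
by rewrite -[sumn alpha]/(sumn (0 :: alpha)) sumnE [RHS](big_nth 0) /= size_tuple big_mkord.
Qed.

Lemma stern_prod_zstern n k :
  (\prod_(i < m) stern n (k + i) ^ tnth alpha i =
   \prod_(i < m.+2) zstern n (k + i) ^ nth 0 (0 :: alpha) i)%N.
Proof.
rewrite big_ord_recl /= expn0 mul1n big_ord_recr /= nth_default ?size_tuple // expn0 muln1.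
by apply: eq_bigr => i _; rewrite /bump /= add1n addnS zsternS (tnth_nth 0).
Qed.

Lemma u_alpha_widen n : has (fun e => 0 < e)%N alpha ->
  u_alpha alpha n = (\sum_(k < 2 ^ n.+2) \prod_(i < m) stern n (k + i) ^ tnth alpha i)%N.
Proof.
case/(has_nthP 0) => i0; rewrite size_tuple => i0_lt_m alpha_i0.
have Nrow_lt : ((Nrow n).+1 <= 2 ^ n.+2)%N.
  by rewrite /Nrow !expnS; have := expn_gt0 2 n; lia.
rewrite /u_alpha.
rewrite (big_ord_widen _ (fun k => \prod_(i < m) stern n (k + i) ^ tnth alpha i)%N Nrow_lt).
rewrite big_mkcond; apply: eq_bigr => k _; case: ltnP => // k_gt.
rewrite (bigD1 (Ordinal i0_lt_m)) //= stern_gt ?(tnth_nth 0) /= ?exp0n //.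
by rewrite (leq_trans k_gt) ?leq_addr.
Qed.

Lemma u_alpha_window_sum (F : comNzRingType) n : has (fun e => 0 < e)%N alpha ->
  (u_alpha alpha n)%:R = window_sum F stern_exponent n.
Proof.
move=> alpha_pos; rewrite u_alpha_widen // natr_sum; apply: eq_bigr => k _.
rewrite stern_prod_zstern natr_prod; apply: eq_bigr => i _.
by rewrite natrX stern_exponentE.
Qed.

End SternExponent.

Theorem theorem2p1 (R : realType) (m : nat) (alpha : m.-tuple nat) :
  (0 < m)%N -> has (fun e => 0 < e)%N alpha ->
  exists P Q : {poly R[i]},
    Q.[0] != 0 /\
    forall n : nat,
      \sum_(j < n.+1) Q`_j * ((u_alpha alpha (n - j)%N)%:R : R[i]) = P`_n.
Proof.
move=> m_gt0 alpha_pos.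
have L_gt2 : (2 < m.+2)%N by rewrite ltnS.
have system := trunc_window_sum_recurrence R[i] L_gt2 (sumn_gt0 alpha_pos).
apply: (eq_rational_gf (w := fun n => (u_alpha alpha n)%:R))
  (linear_system_rational_gf system (stern_exponent alpha)) => n.
by rewrite /trunc_window_sum mdeg_stern_exponent leqnn u_alpha_window_sum.
Qed.
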